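(* Let $A[0..m-1]$ and $B[0..n-1]$ be arrays sorted with respect to a total preorder $\leq$ on keys, and let $p\geq 1$ processing elements with shared access to $A$, $B$ and an output array $C[0..m+n-1]$ execute the parallel merge algorithm described in the context. Then afterwards $C=\mathsf{stable\_merge}(A,B,\leq)$ (the merge is stable), the number of elements merged by each processing element is at most $\lceil (m+n)/p\rceil$, and the total time complexity is $\mathcal{O}\!\left(\frac{n+m}{p}+\log\min(m,n)\right)$.
   Context: $\mathsf{stable\_merge}(X,Y,\leq)$ is the sorted merge of $X$ and $Y$ preserving the relative order within each array and placing elements of $X$ before equal-keyed elements of $Y$; a sequential stable merge of arrays of lengths $a,b$ running in $\mathcal{O}(a+b)$ time is assumed available. For $0\le i\le m+n$, the co-ranks of $i$ are the unique $(j,k)$ with $0\le j\le m$, $0\le k\le n$, $j+k=i$, ($j=0$ or $A[j-1]\leq B[k]$) and ($k=0$ or $B[k-1]<A[j]$) (with sentinels $A[m]=B[n]=+\infty$); they are computed by the procedure $\mathsf{co\_rank}$: set $j\gets\min(i,m)$, $k\gets i-j$, $j_{\rm low}\gets\max(0,i-n)$; repeat: if $j>0$, $k<n$ and $A[j-1]>B[k]$ then $\delta\gets\lceil (j-j_{\rm low})/2\rceil$, $k_{\rm low}\gets k$, $j\gets j-\delta$, $k\gets k+\delta$; else if $k>0$, $j<m$ and $B[k-1]\geq A[j]$ then $\delta\gets\lceil (k-k_{\rm low})/2\rceil$, $j_{\rm low}\gets j$, $j\gets j+\delta$, $k\gets k-\delta$; else stop and return $(j,k)$. Parallel merge algorithm: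 processing element $r$, $0\le r<p$, independently computes $i_r=\lfloor r(m+n)/p\rfloor$ and $i_{r+1}=\lfloor (r+1)(m+n)/p\rfloor$, computes $(j_r,k_r)=\mathsf{co\_rank}(i_r,A,m,B,n,\leq)$ and $(j_{r+1},k_{r+1})=\mathsf{co\_rank}(i_{r+1},A,m,B,n,\leq)$, and then sequentially stably merges $A[j_r,\ldots,j_{r+1}-1]$ and $B[k_r,\ldots,k_{r+1}-1]$ into $C[i_r,\ldots,i_{r+1}-1]$. *)

From mathcomp Require Import all_boot.
Set Implicit Arguments.
Unset Strict Implicit.
Unset Printing Implicit Defensive.

(* Arrays are sequences [seq T]; indices are 0-based.
   Keys are compared by a relation [le : rel T] (assumed in the theorem to be
   a total preorder).  [x0] is an arbitrary default element used for [nth]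
   (only ever read at in-range indices). *)

(* The stable merge of X and Y: MathComp's [path.merge], which takes the head
   of X whenever it is <= the head of Y, i.e. X-elements go before
   equal-keyed Y-elements. *)
Definition stable_merge (T : Type) (le : rel T) (X Y : seq T) : seq T :=
  merge le X Y.

Definition slice (T : Type) (X : seq T) (a b : nat) : seq T :=
  take (b - a) (drop a X).

Fixpoint co_rank_loop (T : Type) (le : rel T) (x0 : T) (A B : seq T)
    (fuel j k jlow klow steps : nat) {struct fuel} : nat * nat * nat :=
  match fuel with
  | 0 => (j, k, steps)
  | fuel'.+1 =>
    let m := size A in let n := size B in
    if [&& 0 < j, k < n & ~~ le (nth x0 A j.-1) (nth x0 B k)] then
      let delta := (j - jlow).+1 %/ 2 in
      co_rank_loop le x0 A B fuel' (j - delta) (k + delta) jlow k steps.+1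
    else if [&& 0 < k, j < m & le (nth x0 A j) (nth x0 B k.-1)] then
      let delta := (k - klow).+1 %/ 2 in
      co_rank_loop le x0 A B fuel' (j + delta) (k - delta) j klow steps.+1
    else (j, k, steps.+1)
  end.

(* co_rank(i, A, m, B, n, <=): j = min(i,m), k = i - j,
   j_low = max(0, i-n), k_low = max(0, i-m).  Fuel m+n+1 is a generous bound
   (the loop provably stops far earlier). *)
Definition co_rank_run (T : Type) (le : rel T) (x0 : T) (A B : seq T)
    (i : nat) : nat * nat * nat :=
  let m := size A in let n := size B in
  co_rank_loop le x0 A B (m + n).+1 (minn i m) (i - minn i m) (i - n) (i - m) 0.

Definition co_rank (T : Type) (le : rel T) (x0 : T) (A B : seq T) (i : nat)
  : nat * nat := (co_rank_run le x0 A B i).1.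
Definition co_rank_steps (T : Type) (le : rel T) (x0 : T) (A B : seq T)
    (i : nat) : nat := (co_rank_run le x0 A B i).2.

Definition split_index (m n p r : nat) : nat := (r * (m + n)) %/ p.

Section PE.
Variables (T : Type) (le : rel T) (x0 : T) (A B : seq T) (p : nat).

Definition ir (r : nat) : nat := split_index (size A) (size B) p r.
Definition jr (r : nat) : nat := (co_rank le x0 A B (ir r)).1.
Definition kr (r : nat) : nat := (co_rank le x0 A B (ir r)).2.

Definition pe_output (r : nat) : seq T :=
  stable_merge le (slice A (jr r) (jr r.+1)) (slice B (kr r) (kr r.+1)).

Definition pe_count (r : nat) : nat :=
  (jr r.+1 - jr r) + (kr r.+1 - kr r).

(* Time of processing element r (unit-cost model): O(1) for computing the
   split indices, one unit per co_rank loop iteration, and a + b for the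
   sequential merge of lengths a, b. *)
Definition pe_time (r : nat) : nat :=
  1 + co_rank_steps le x0 A B (ir r) + co_rank_steps le x0 A B (ir r.+1)
    + pe_count r.

Definition par_time : nat := \max_(r < p) pe_time r.
End PE.

Definition write_block (T : Type) (x0 : T) (C : seq T) (i : nat) (s : seq T)
  : seq T :=
  [seq if (i <= q) && (q < i + size s) then nth x0 s (q - i) else nth x0 C q
  | q <- iota 0 (size C)].

(* Final content of the shared output array C, initially C0, after every
   processing element r < p has written its output to C[i_r ..]. *)
Definition parallel_merge_result (T : Type) (le : rel T) (x0 : T)
    (A B : seq T) (p : nat) (C0 : seq T) : seq T :=
  foldl (fun C r => write_block x0 C (ir A B p r) (pe_output le x0 A B p r))
    C0 (iota 0 p).

From mathcomp Require Import all_boot zify.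
Set Implicit Arguments.
Unset Strict Implicit.
Unset Printing Implicit Defensive.

(* The co-ranks (j, k) of i cut A and B so that the stable merge splits as
   merge A B = merge A[0..j) B[0..k) ++ merge A[j..) B[k..), and co-ranks are
   monotone in i.  Hence processing element r merges exactly the block
   C[i_r .. i_(r+1)) of the stable merge, which has at most ceil((m+n)/p)
   elements.
   On the search interval [max(0, i-n), min(i, m)] the set of j with
   "B[i-j-1] >= A[j]" (j too small) is downward closed, so there is a unique
   split point where neither branch of the co_rank loop fires.  The loop keeps
   it inside [j_low, i - k_low] while halving the distance from j to both ends,
   so it stops there after at most log2 min(m, n) + 3 iterations. *)

Section CoRankConditions.
Variables (T : Type) (le : rel T) (x0 : T).

(* [A[j-1] <= B[k]] and [B[k-1] < A[j]], vacuous at the boundary: this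
   encodes the sentinels [A[m] = B[n] = +oo] of the co-rank conditions. *)
Definition le_at (A B : seq T) j k :=
  (0 < j) ==> (k < size B) ==> le (nth x0 A j.-1) (nth x0 B k).
Definition lt_at (A B : seq T) j k :=
  (0 < k) ==> (j < size A) ==> ~~ le (nth x0 A j) (nth x0 B k.-1).

Definition is_co_rank (A B : seq T) j k :=
  [&& j <= size A, k <= size B, le_at A B j k & lt_at A B j k].

Lemma is_co_rank_consl x A B j k :
  is_co_rank (x :: A) B j.+1 k -> is_co_rank A B j k.
Proof.
rewrite /is_co_rank /le_at /lt_at; case: j => [|j] //=.
by case/and3P=> -> _; apply.
Qed.

Lemma is_co_rank_consr y A B j k :
  is_co_rank A (y :: B) j k.+1 -> is_co_rank A B j k.
Proof.
rewrite /is_co_rank /le_at /lt_at; case: k => [|k] //=.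
by case/and3P=> -> + _; rewrite andbT; apply.
Qed.

Lemma is_co_rank_drop A B j1 k1 j2 k2 : j1 <= j2 -> k1 <= k2 ->
  is_co_rank A B j2 k2 -> is_co_rank (drop j1 A) (drop k1 B) (j2 - j1) (k2 - k1).
Proof.
move=> j12 k12 /and4P[j2A k2B le2 lt2].
rewrite /is_co_rank /le_at /lt_at !size_drop !nth_drop !subnKC //.
apply/and4P; split; [lia | lia | apply/implyP => j0 | apply/implyP => k0].
  have -> : j1 + (j2 - j1).-1 = j2.-1 by lia.
  by apply/implyP => kB; apply: (implyP (implyP le2 _)); lia.
have -> : k1 + (k2 - k1).-1 = k2.-1 by lia.
by apply/implyP => jA; apply: (implyP (implyP lt2 _)); lia.
Qed.

Hypotheses (le_total : total le) (le_trans : transitive le).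

Lemma le_refl : reflexive le.
Proof. by move=> x; case/orP: (le_total x x). Qed.

Lemma sorted_le_nth (s : seq T) a b : sorted le s -> a <= b -> b < size s ->
  le (nth x0 s a) (nth x0 s b).
Proof.
move=> s_sorted ab b_lt; apply: (sorted_leq_nth le_trans le_refl) => //.
by rewrite inE (leq_ltn_trans ab).
Qed.

Lemma merges0 s : merge le s [::] = s.
Proof. by case: s. Qed.

Lemma merge_cons x y s t : merge le (x :: s) (y :: t) =
  if le x y then x :: merge le s (y :: t) else y :: merge le (x :: s) t.
Proof. by []. Qed.

Lemma merge_take_drop (A B : seq T) j k : sorted le A -> sorted le B ->
  is_co_rank A B j k ->
  merge le A B = merge le (take j A) (take k B) ++ merge le (drop j A) (drop k B).
Proof.
elim: A B j k => [|x A IHA] B j k sA sB; first by rewrite /= cat_take_drop.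
elim: B j k sB => [|y B IHB] j k sB crk; first by rewrite !merges0 cat_take_drop.
have sA' := path_sorted sA; have sB' := path_sorted sB.
case: j k crk => [|j] [|k] crk; rewrite ?take0 ?drop0 ?take_cons ?drop_cons //.
- have /negbTE nle_xy : ~~ le x y.
    case/and4P: crk => _ kB _; rewrite /lt_at /=; apply: contra => le_xy.
    by apply: le_trans le_xy _; rewrite -[y]/(nth x0 (y :: B) 0) sorted_le_nth.
  by rewrite merge_cons nle_xy (IHB 0 k sB' (is_co_rank_consr crk)).
- have le_xy : le x y.
    case/and4P: crk => jA _; rewrite /le_at /= => le_Aj_y _.
    by apply: le_trans le_Aj_y; rewrite -[x]/(nth x0 (x :: A) 0) sorted_le_nth.
  by rewrite merge_cons le_xy (IHA (y :: B) j 0 sA' sB (is_co_rank_consl crk))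
             take0 drop0 !merges0.
- rewrite !merge_cons; case: ifP => _.
  + by rewrite (IHA (y :: B) j k.+1 sA' sB (is_co_rank_consl crk)).
  + by rewrite (IHB j.+1 k sB' (is_co_rank_consr crk)).
Qed.

Lemma is_co_rank_mono (A B : seq T) j1 k1 j2 k2 : sorted le A -> sorted le B ->
  is_co_rank A B j1 k1 -> is_co_rank A B j2 k2 -> j1 + k1 <= j2 + k2 ->
  j1 <= j2 /\ k1 <= k2.
Proof.
move=> sA sB /and4P[j1A k1B le1 lt1] /and4P[j2A k2B le2 lt2] sum12.
split; rewrite leqNgt; apply/negP => lt12.
- have /negP : ~~ le (nth x0 A j2) (nth x0 B k2.-1).
    by apply: (implyP (implyP lt2 _)); lia.
  apply; apply: le_trans (sorted_le_nth sA (_ : j2 <= j1.-1) _) _; [lia | lia |].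
  apply: le_trans (_ : le _ (nth x0 B k1)) _.
    by apply: (implyP (implyP le1 _)); lia.
  by apply: sorted_le_nth => //; lia.
- have /negP : ~~ le (nth x0 A j1) (nth x0 B k1.-1).
    by apply: (implyP (implyP lt1 _)); lia.
  apply; apply: le_trans (sorted_le_nth sA (_ : j1 <= j2.-1) _) _; [lia | lia |].
  apply: le_trans (_ : le _ (nth x0 B k2)) _.
    by apply: (implyP (implyP le2 _)); lia.
  by apply: sorted_le_nth => //; lia.
Qed.

Lemma merge_slice (A B : seq T) j1 k1 j2 k2 : sorted le A -> sorted le B ->
  is_co_rank A B j1 k1 -> is_co_rank A B j2 k2 -> j1 + k1 <= j2 + k2 ->
  merge le (slice A j1 j2) (slice B k1 k2) =
  take ((j2 + k2) - (j1 + k1)) (drop (j1 + k1) (merge le A B)).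
Proof.
move=> sA sB crk1 crk2 sum12.
have [j12 k12] := is_co_rank_mono sA sB crk1 crk2 sum12.
have /and4P[j1A k1B _ _] := crk1; have /and4P[j2A k2B _ _] := crk2.
have size_merge_take (X Y : seq T) n1 n2 : n1 <= size X -> n2 <= size Y ->
    size (merge le (take n1 X) (take n2 Y)) = n1 + n2.
  by move=> n1A n2B; rewrite size_merge size_cat !size_takel.
rewrite (merge_take_drop sA sB crk1) drop_size_cat ?size_merge_take //.
rewrite (merge_take_drop (drop_sorted _ sA) (drop_sorted _ sB)
           (is_co_rank_drop j12 k12 crk2)).
rewrite take_size_cat // size_merge_take ?size_drop; lia.
Qed.

End CoRankConditions.

Lemma threshold_of_down_closed (P : pred nat) lo hi :
  lo <= hi -> ~~ P hi -> (forall j, lo <= j -> j < hi -> P j.+1 -> P j) ->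
  exists2 js, lo <= js <= hi & forall j, lo <= j -> j <= hi -> P j = (j < js).
Proof.
move=> lo_hi nPhi P_down.
have exP : exists j, (lo <= j) && ~~ P j by exists hi; rewrite lo_hi.
case: (ex_minnP exP) => js /andP[lo_js nPjs] js_min.
have js_hi : js <= hi by apply: js_min; rewrite lo_hi.
have P_above d : js + d <= hi -> P (js + d) = false.
  elim: d => [|d IHd] le_hi; first by rewrite addn0 (negbTE nPjs).
  apply/negP => P_succ; have : P (js + d) = false by apply: IHd; lia.
  by rewrite P_down //; [lia | lia | rewrite -addnS].
exists js => [|j lo_j j_hi]; first by rewrite lo_js.
case: ltnP => [j_js | js_j]; last by rewrite -(subnKC js_j) P_above ?subnKC.
apply/negbNE/negP => nPj.
by have := js_min j; rewrite lo_j nPj leqNgt j_js => /(_ isT).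
Qed.

Section CoRank.
Variables (T : Type) (le : rel T) (x0 : T).
Hypotheses (le_total : total le) (le_trans : transitive le).
Variables (A B : seq T) (i : nat).
Hypotheses (sA : sorted le A) (sB : sorted le B) (i_le : i <= size A + size B).

(* By truncated subtraction [lo] is [max(0, i-n)]; co_rank searches j in
   [lo, hi]. *)
Local Notation lo := (i - size B).
Local Notation hi := (minn i (size A)).

Lemma co_rank_loopE fuel j k jlow klow steps :
  co_rank_loop le x0 A B fuel.+1 j k jlow klow steps =
  if ~~ le_at le x0 A B j k then
    co_rank_loop le x0 A B fuel (j - (j - jlow).+1 %/ 2) (k + (j - jlow).+1 %/ 2)
      jlow k steps.+1
  else if ~~ lt_at le x0 A B j k then
    co_rank_loop le x0 A B fuel (j + (k - klow).+1 %/ 2) (k - (k - klow).+1 %/ 2)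
      j klow steps.+1
  else (j, k, steps.+1).
Proof. by rewrite /= /le_at /lt_at !negb_imply /= andbT. Qed.

Definition too_large j := ~~ le_at le x0 A B j (i - j).
Definition too_small j := ~~ lt_at le x0 A B j (i - j).

Lemma too_largeE j : too_large j =
  [&& 0 < j, i - j < size B & ~~ le (nth x0 A j.-1) (nth x0 B (i - j))].
Proof. by rewrite /too_large /le_at negb_imply negb_imply. Qed.

Lemma too_smallE j : too_small j =
  [&& 0 < i - j, j < size A & le (nth x0 A j) (nth x0 B (i - j).-1)].
Proof. by rewrite /too_small /lt_at negb_imply negb_imply negbK. Qed.

Lemma too_small_pred j : lo <= j -> j < hi -> too_small j.+1 -> too_small j.
Proof.
rewrite !too_smallE => lo_j j_hi /and3P[_ jA le_j].
apply/and3P; split; [lia | lia |].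
apply: le_trans (sorted_le_nth x0 le_total le_trans sA (leqnSn j) jA) _.
apply: le_trans le_j _; apply: sorted_le_nth => //; lia.
Qed.

Lemma too_large_succ j : lo <= j -> j < hi -> too_large j.+1 = ~~ too_small j.
Proof.
rewrite too_largeE too_smallE => lo_j j_hi.
have -> : (i - j).-1 = i - j.+1 by lia.
have -> : 0 < i - j by lia.
have -> : j < size A by lia.
by have -> : i - j.+1 < size B by lia.
Qed.

Lemma too_large_lo : too_large lo = false.
Proof.
rewrite too_largeE; case: posnP => //= lo_gt0.
by rewrite ltnNge (_ : size B <= i - lo) //; lia.
Qed.

Lemma too_small_hi : too_small hi = false.
Proof.
rewrite too_smallE /minn.
by case: (ltnP i (size A)) => _; rewrite ?subnn ?ltnn ?andbF.
Qed.

Lemma split_point_exists :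
  exists2 js, lo <= js <= hi &
    forall j, lo <= j -> j <= hi -> too_small j = (j < js).
Proof.
apply: threshold_of_down_closed; [lia | by rewrite too_small_hi |].
exact: too_small_pred.
Qed.

Section Loop.
Variable js : nat.
Hypotheses (lo_js : lo <= js) (js_hi : js <= hi).
Hypothesis too_small_js : forall j, lo <= j -> j <= hi -> too_small j = (j < js).

Lemma too_large_js j : lo <= j -> j <= hi -> too_large j = (js < j).
Proof.
move=> lo_j j_hi; have [->|lo_lt_j] := eqVneq j lo.
  by rewrite too_large_lo ltnNge lo_js.
have -> : j = j.-1.+1 by lia.
by rewrite too_large_succ ?too_small_js -?leqNgt //; lia.
Qed.

Lemma co_rank_loop_step fuel j jlow klow steps : lo <= j -> j <= hi ->
  co_rank_loop le x0 A B fuel.+1 j (i - j) jlow klow steps =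
  if js < j then
    let j' := j - (j - jlow).+1 %/ 2 in
    co_rank_loop le x0 A B fuel j' (i - j') jlow (i - j) steps.+1
  else if j < js then
    let j' := j + (i - j - klow).+1 %/ 2 in
    co_rank_loop le x0 A B fuel j' (i - j') j klow steps.+1
  else (j, i - j, steps.+1).
Proof.
move=> lo_j j_hi; rewrite co_rank_loopE -/(too_large j) -/(too_small j).
rewrite too_large_js // too_small_js //; case: ltngtP => // js_j /=.
  by congr co_rank_loop; lia.
by rewrite subnDA.
Qed.

Lemma co_rank_loop_at_split fuel jlow klow steps :
  co_rank_loop le x0 A B fuel.+1 js (i - js) jlow klow steps =
  (js, i - js, steps.+1).
Proof. by rewrite co_rank_loop_step // ltnn. Qed.

Lemma co_rank_loop_converges e fuel j jlow klow steps :
  e.+2 <= fuel -> lo <= jlow -> jlow <= js -> js <= i - klow -> i - klow <= hi ->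
  jlow <= j -> j <= i - klow -> klow <= i ->
  j - jlow <= 2 ^ e -> i - klow - j <= 2 ^ e ->
  exists2 s, co_rank_loop le x0 A B fuel j (i - j) jlow klow steps = (js, i - js, s)
           & s <= steps + e.+2.
Proof.
elim: e fuel j jlow klow steps => [|e IHe] fuel j jlow klow steps
  fuel_ge lo_jlow jlow_js js_klow klow_hi jlow_j j_klow klow_i wl wr;
  case: fuel fuel_ge => // fuel fuel_ge;
  rewrite co_rank_loop_step; try lia; case: ltngtP => /= js_j.
- have -> : j - (j - jlow).+1 %/ 2 = js by rewrite expn0 in wl; lia.
  case: fuel fuel_ge => // fuel _; rewrite co_rank_loop_at_split.
  by exists steps.+2 => //; lia.
- have -> : j + (i - j - klow).+1 %/ 2 = js by rewrite expn0 in wr; lia.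
  case: fuel fuel_ge => // fuel _; rewrite co_rank_loop_at_split.
  by exists steps.+2 => //; lia.
- by exists steps.+1; [rewrite js_j | lia].
- rewrite expnS in wl wr; set P := 2 ^ e in wl wr IHe.
  have [] := IHe fuel (j - (j - jlow).+1 %/ 2) jlow (i - j) steps.+1; try lia.
  by move=> s -> s_le; exists s => //; lia.
- rewrite expnS in wl wr; set P := 2 ^ e in wl wr IHe.
  have [] := IHe fuel (j + (i - j - klow).+1 %/ 2) j klow steps.+1; try lia.
  by move=> s -> s_le; exists s => //; lia.
- by exists steps.+1; [rewrite js_j | lia].
Qed.

End Loop.

Lemma co_rank_run_spec : let: (j, k, s) := co_rank_run le x0 A B i in
  [/\ is_co_rank le x0 A B j k, j + k = i
    & s <= trunc_log 2 (minn (size A) (size B)) + 3].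
Proof.
have [js /andP[lo_js js_hi] too_small_js] := split_point_exists.
suff [s -> s_le] : exists2 s, co_rank_run le x0 A B i = (js, i - js, s)
                            & s <= trunc_log 2 (minn (size A) (size B)) + 3.
  split=> //; last lia.
  have := too_large_js lo_js js_hi too_small_js lo_js js_hi.
  have := too_small_js js lo_js js_hi; rewrite /too_large /too_small ltnn.
  by move=> /negbFE lt_js /negbFE le_js; rewrite /is_co_rank le_js lt_js andbT; lia.
have -> : co_rank_run le x0 A B i =
          co_rank_loop le x0 A B (size A + size B).+1 hi (i - hi) lo (i - size A) 0
  by [].
have [W0 | W_gt0] := posnP (hi - lo).
  rewrite (_ : hi = js); last lia.
  by exists 1; [exact: co_rank_loop_at_split | rewrite addn3].
set t := trunc_log 2 (hi - lo).
have pow_t_le : 2 ^ t <= hi - lo by apply: trunc_logP.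
have lt_pow_t : hi - lo < 2 ^ t.+1 by apply: trunc_log_ltn.
have t_lt : t < 2 ^ t by apply: ltn_expl.
have t_le : t <= trunc_log 2 (minn (size A) (size B)) by apply: leq_trunc_log; lia.
have [] := co_rank_loop_converges lo_js js_hi too_small_js (e := t.+1)
  (fuel := (size A + size B).+1) (j := hi) (jlow := lo) (klow := i - size A)
  0; try lia.
by move=> s -> s_le; exists s => //; lia.
Qed.

End CoRank.

Lemma split_index_gap m n p r : 0 < p ->
  split_index m n p r.+1 - split_index m n p r <= (m + n + p.-1) %/ p.
Proof.
rewrite /split_index; set N := m + n => p_gt0.
have -> : (r.+1 * N) %/ p = (r * N) %/ p + ((r * N) %% p + N) %/ p.
  by rewrite mulSn addnC {1}(divn_eq (r * N) p) -addnA divnMDl.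
rewrite addKn addnC; apply/leq_div2r/leq_add => //.
by have := ltn_pmod (r * N) p_gt0; lia.
Qed.

Lemma size_write_block (T : Type) (x0 : T) C i s :
  size (write_block x0 C i s) = size C.
Proof. by rewrite /write_block size_map size_iota. Qed.

Lemma nth_write_block (T : Type) (x0 : T) C i s q : q < size C ->
  nth x0 (write_block x0 C i s) q =
  if (i <= q) && (q < i + size s) then nth x0 s (q - i) else nth x0 C q.
Proof. by move=> qC; rewrite /write_block (nth_map 0) ?nth_iota ?size_iota. Qed.

Section ParallelMerge.
Variables (T : Type) (le : rel T) (x0 : T) (A B : seq T) (p : nat).
Hypotheses (le_total : total le) (le_trans : transitive le).
Hypotheses (sA : sorted le A) (sB : sorted le B) (p_gt0 : 0 < p).

Local Notation N := (size A + size B).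
Local Notation L := (trunc_log 2 (minn (size A) (size B))).
Local Notation ir := (ir A B p).
Local Notation jr := (jr le x0 A B p).
Local Notation kr := (kr le x0 A B p).

Lemma ir0 : ir 0 = 0.
Proof. by rewrite /ir /split_index mul0n div0n. Qed.

Lemma ir_last : ir p = N.
Proof. by rewrite /ir /split_index mulKn. Qed.

Lemma ir_mono r : ir r <= ir r.+1.
Proof. by rewrite /ir /split_index leq_div2r // leq_mul. Qed.

Lemma ir_le r : r <= p -> ir r <= N.
Proof. by move=> rp; rewrite -ir_last /ir /split_index leq_div2r // leq_mul. Qed.

Lemma co_rank_ir r : r <= p ->
  is_co_rank le x0 A B (jr r) (kr r) /\ jr r + kr r = ir r.
Proof.
move=> rp; have := co_rank_run_spec x0 le_total le_trans sA sB (ir_le rp).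
by rewrite /jr /kr /co_rank; case: co_rank_run => [[j k] s] [].
Qed.

Lemma co_rank_steps_ir r : r <= p -> co_rank_steps le x0 A B (ir r) <= L + 3.
Proof.
move=> rp; have := co_rank_run_spec x0 le_total le_trans sA sB (ir_le rp).
by rewrite /co_rank_steps; case: co_rank_run => [[j k] s] [].
Qed.

Lemma pe_outputE r : r < p ->
  pe_output le x0 A B p r = take (ir r.+1 - ir r) (drop (ir r) (merge le A B)).
Proof.
move=> rp; have [crk1 sum1] := co_rank_ir (ltnW rp).
have [crk2 sum2] := co_rank_ir rp.
rewrite /pe_output /stable_merge (merge_slice le_total le_trans sA sB crk1 crk2).
  by rewrite sum1 sum2.
by rewrite sum1 sum2 ir_mono.
Qed.

Lemma pe_countE r : r < p -> pe_count le x0 A B p r = ir r.+1 - ir r.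
Proof.
move=> rp; have [crk1 sum1] := co_rank_ir (ltnW rp).
have [crk2 sum2] := co_rank_ir rp.
have [] := is_co_rank_mono le_total le_trans sA sB crk1 crk2.
  by rewrite sum1 sum2 ir_mono.
by rewrite /pe_count -sum1 -sum2; lia.
Qed.

Lemma pe_count_le r : r < p -> pe_count le x0 A B p r <= (N + p.-1) %/ p.
Proof. by move=> rp; rewrite pe_countE //; apply: split_index_gap. Qed.

Lemma pe_time_le r : r < p -> pe_time le x0 A B p r <= 8 * (N %/ p + L + 1).
Proof.
move=> rp; have steps_r := co_rank_steps_ir (ltnW rp).
have steps_r1 := co_rank_steps_ir rp.
have count_r := pe_count_le rp.
have ceil_le : (N + p.-1) %/ p <= N %/ p + 1.
  by have := leq_divDl p N p.-1; rewrite (divn_small (_ : p.-1 < p)) ?addn0 //; lia.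
(* Hide the divisions by the variable [p] from lia. *)
rewrite /pe_time; move: steps_r steps_r1 count_r ceil_le.
set s1 := co_rank_steps _ _ _ _ _; set s2 := co_rank_steps _ _ _ _ _.
set c := pe_count _ _ _ _ _ _; set ceil := (N + p.-1) %/ p; set d := N %/ p.
lia.
Qed.

Lemma par_time_le : par_time le x0 A B p <= 8 * (N %/ p + L + 1).
Proof. by apply/bigmax_leqP => r _; apply: pe_time_le. Qed.

Lemma parallel_merge_prefix C0 q : size C0 = N -> q <= p ->
  let C := foldl (fun C r => write_block x0 C (ir r) (pe_output le x0 A B p r))
                 C0 (iota 0 q) in
  size C = N /\ forall idx, idx < N ->
    nth x0 C idx = if idx < ir q then nth x0 (merge le A B) idx else nth x0 C0 idx.
Proof.
move=> sizeC0; elim: q => [|q IHq] qp; first by split=> // idx _; rewrite ir0.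
have [sizeC nthC] := IHq (ltnW qp); rewrite -addn1 iotaD foldl_cat /= add0n addn1.
set C := foldl _ C0 (iota 0 q) in sizeC nthC *.
split=> [|idx idxN]; first by rewrite size_write_block.
have irq := ir_mono q; have irq1 := ir_le qp.
have size_M : size (merge le A B) = N by rewrite size_merge size_cat.
rewrite nth_write_block ?sizeC // pe_outputE // nthC // size_takel; last first.
  by rewrite size_drop size_M; lia.
rewrite subnKC //; have [idx_q | q_idx] := ltnP idx (ir q).
  by rewrite (leq_trans idx_q irq).
case: ltnP => //= idx_q1.
by rewrite nth_take ?nth_drop ?subnKC //; lia.
Qed.

Lemma parallel_merge_resultE C0 : size C0 = N ->
  parallel_merge_result le x0 A B p C0 = stable_merge le A B.
Proof.
move=> sizeC0; have [sizeC nthC] := parallel_merge_prefix sizeC0 (leqnn p).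
apply: (eq_from_nth (x0 := x0)); first by rewrite sizeC size_merge size_cat.
by move=> idx; rewrite sizeC => idxN; rewrite nthC // ir_last idxN.
Qed.

End ParallelMerge.

Theorem proposition2 :
  exists c : nat,
  forall (T : Type) (le : rel T) (x0 : T) (A B : seq T) (p : nat) (C0 : seq T),
    total le -> transitive le ->
    sorted le A -> sorted le B ->
    0 < p ->
    size C0 = size A + size B ->
    [/\ parallel_merge_result le x0 A B p C0 = stable_merge le A B,
        (forall r, r < p ->
           pe_count le x0 A B p r <= (size A + size B + p.-1) %/ p)
      & par_time le x0 A B p <=
          c * ((size A + size B) %/ p + trunc_log 2 (minn (size A) (size B)) + 1)].
Proof.
exists 8 => T le x0 A B p C0 le_total le_trans sA sB p_gt0 sizeC0; split.
- exact: parallel_merge_resultE.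
- exact: pe_count_le.
- exact: par_time_le.
Qed.
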